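(* Let $\ell\ge3$ be an odd integer and $q=(\ell^2-1)/2$, so $2q+1=\ell^2$. Define $g:\mathbb Z_{2q+1}\to\mathbb R$ by $g(n)=\sin(2\pi|n|/\ell)$ if $|n|\le\ell$ and $g(n)=0$ otherwise ($|n|\le q$). Then for $|n|\le q$, $$\widehat g(n)=\frac{2\sin^2(\pi n/\ell)\sin(2\pi/\ell)}{\ell\,\big(\cos(2\pi n/\ell^2)-\cos(2\pi/\ell)\big)},$$ and $f_\star=g-\widehat g$ satisfies $\widehat{f_\star}=-f_\star$, $f_\star(0)=0$, $f_\star(n)\ge0$ for $\ell\le|n|\le q$, and a positive multiple of $f_\star$ lies in $\mathcal A^{\rm disc}_-(q)$ with $k_{-f_\star}=\ell$. Consequently $\mathbb A^{\rm disc}_-(q)\le\ell=\sqrt{2q+1}$.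
   Context: $\mathbb Z_{2q+1}$ is the integers modulo $2q+1$ with representatives $\{-q,\dots,q\}$, and $|n|$ denotes the absolute value of the representative of $n$. The discrete Fourier transform is $\widehat f(k)=\frac1{\sqrt{2q+1}}\sum_{n=-q}^qf(n)e^{-2\pi ikn/(2q+1)}$ (at $n=0$ the formula for $\widehat g$ is interpreted as $0$). For $s\in\{+1,-1\}$, $\mathcal A^{\rm disc}_s(q)$ is the set of even $f:\mathbb Z_{2q+1}\to\mathbb R$ with $sf(0)\le0$, $\widehat f(0)\le0$, $f(\pm q)\ge1$ and $s\widehat f(\pm q)\ge1$; $k_{sf}$ is the smallest nonnegative integer $k$ such that $f(n)\ge0$ and $s\widehat f(n)\ge0$ whenever $k\le|n|\le q$; and $\mathbb A^{\rm disc}_s(q)=\min\{k_{sf}: f\in\mathcal A^{\rm disc}_s(q)\}$. *)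

From Stdlib Require Export Reals ZArith.
Open Scope R_scope.

(* Z_{2q+1} is represented by Z with representatives -q..q; functions
   Z_{2q+1} -> R are functions Z -> R of which only the values on
   -q..q matter. |n| is Z.abs n for n in -q..q. *)

Definition zsum (q : Z) (F : Z -> R) : R :=
  sum_f_R0 (fun i => F (Z.of_nat i - q)%Z) (Z.to_nat (2 * q)).

(* Discrete Fourier transform
   f^(k) = 1/sqrt(2q+1) sum_n f(n) e^{-2 pi i k n/(2q+1)},
   given by its real and imaginary parts. *)
Definition dft_re (q : Z) (f : Z -> R) (k : Z) : R :=
  / sqrt (IZR (2 * q + 1)) *
  zsum q (fun n => f n * cos (2 * PI * IZR k * IZR n / IZR (2 * q + 1))).

Definition dft_im (q : Z) (f : Z -> R) (k : Z) : R :=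
  - (/ sqrt (IZR (2 * q + 1)) *
     zsum q (fun n => f n * sin (2 * PI * IZR k * IZR n / IZR (2 * q + 1)))).

Definition even_on (q : Z) (f : Z -> R) : Prop :=
  forall n : Z, (- q <= n <= q)%Z -> f (- n)%Z = f n.

(* The class A^disc_s(q). Inequalities involving f^ mean: f^ is real
   (imaginary part 0) and its real part satisfies the inequality. *)
Definition in_Adisc (s : R) (q : Z) (f : Z -> R) : Prop :=
  even_on q f /\
  s * f 0%Z <= 0 /\
  (dft_im q f 0%Z = 0 /\ dft_re q f 0%Z <= 0) /\
  f q >= 1 /\ f (- q)%Z >= 1 /\
  (dft_im q f q = 0 /\ s * dft_re q f q >= 1) /\
  (dft_im q f (- q)%Z = 0 /\ s * dft_re q f (- q)%Z >= 1).

Definition k_prop (s : R) (q : Z) (f : Z -> R) (k : Z) : Prop :=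
  forall n : Z, (k <= Z.abs n <= q)%Z ->
    0 <= f n /\ dft_im q f n = 0 /\ 0 <= s * dft_re q f n.

Definition is_k (s : R) (q : Z) (f : Z -> R) (k : Z) : Prop :=
  (0 <= k)%Z /\ k_prop s q f k /\
  forall k' : Z, (0 <= k' < k)%Z -> ~ k_prop s q f k'.

Definition is_Adisc (s : R) (q : Z) (m : Z) : Prop :=
  (exists f, in_Adisc s q f /\ is_k s q f m) /\
  forall f k, in_Adisc s q f -> is_k s q f k -> (m <= k)%Z.

Definition gfun (l : Z) (n : Z) : R :=
  if (Z.abs n <=? l)%Z then sin (2 * PI * IZR (Z.abs n) / IZR l) else 0.

(* f_star = g - g^ (g^ being real). *)
Definition fstar (l q : Z) (n : Z) : R := gfun l n - dft_re q (gfun l) n.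

From Stdlib Require Import Reals ZArith Lra Lia Psatz.
Open Scope R_scope.

(* Folding the symmetric DFT sum of the even function g onto m = 1..l gives
   g^(n) = (2/l) sum_{m=1}^{l} sin(2 pi m/l) cos(2 pi n m/l^2).  Product-to-sum
   formulas and telescoping over the full period of sin(2 pi m/l) give the closed
   form, and the sum vanishes outright when the denominator does.  The real DFT
   applied twice to an even function is the identity, so f* = g - g^ satisfies
   f*^ = -f*.  For |n| >= l only -g^ survives and the denominator is <= 0 there,
   so f* >= 0; f*(q) > 0 because l does not divide q, which allows normalising
   f*(q) = 1; and f*(l-1) < 0 since g(l-1) < 0 < g^(l-1), so no k < l works. *)

Fixpoint sum1 (G : nat -> R) (M : nat) : R :=
  match M with O => 0 | S M' => sum1 G M' + G (S M') end.

Lemma sum1_ext G H M :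
  (forall m, (1 <= m <= M)%nat -> G m = H m) -> sum1 G M = sum1 H M.
Proof.
  induction M as [|M IH]; intros E; simpl; auto.
  rewrite IH, E by (lia || intros; apply E; lia); reflexivity.
Qed.

Lemma sum1_add G H M : sum1 (fun m => G m + H m) M = sum1 G M + sum1 H M.
Proof. induction M as [|M IH]; simpl; [lra | rewrite IH; lra]. Qed.

Lemma sum1_scal a G M : sum1 (fun m => a * G m) M = a * sum1 G M.
Proof. induction M as [|M IH]; simpl; [lra | rewrite IH; lra]. Qed.

Lemma sum1_const c M : sum1 (fun _ => c) M = c * INR M.
Proof. induction M as [|M IH]; simpl sum1; [simpl; ring | rewrite IH, S_INR; ring]. Qed.

Lemma sum1_eq0 G M : (forall m, (1 <= m <= M)%nat -> G m = 0) -> sum1 G M = 0.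
Proof. intros E. rewrite (sum1_ext G (fun _ => 0)) by auto. rewrite sum1_const. ring. Qed.

Lemma sum1_trunc G L M : (L <= M)%nat ->
  (forall m, (L < m <= M)%nat -> G m = 0) -> sum1 G M = sum1 G L.
Proof.
  induction M as [|M IH]; intros HLM HG.
  - now replace L with 0%nat by lia.
  - destruct (Nat.eq_dec L (S M)) as [->|HL]; auto.
    simpl. rewrite HG, IH by (lia || intros; apply HG; lia). lra.
Qed.

Lemma zsum_ext q F G : (0 <= q)%Z -> (forall n, (- q <= n <= q)%Z -> F n = G n) ->
  zsum q F = zsum q G.
Proof. intros Hq E. unfold zsum. apply sum_eq. intros i Hi. apply E. lia. Qed.

Lemma zsum_add q F G : zsum q (fun n => F n + G n) = zsum q F + zsum q G.
Proof. apply plus_sum. Qed.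

Lemma zsum_scal q a F : zsum q (fun n => a * F n) = a * zsum q F.
Proof. unfold zsum. rewrite scal_sum. apply sum_eq. intros; ring. Qed.

Lemma zsum_mulr q F b : zsum q F * b = zsum q (fun n => F n * b).
Proof. unfold zsum. rewrite Rmult_comm, scal_sum. reflexivity. Qed.

Lemma sum_f_R0_exchange (H : nat -> nat -> R) N1 N2 :
  sum_f_R0 (fun i => sum_f_R0 (fun j => H i j) N2) N1 =
  sum_f_R0 (fun j => sum_f_R0 (fun i => H i j) N1) N2.
Proof.
  induction N1 as [|N1 IH]; simpl; auto.
  rewrite IH, <- plus_sum. apply sum_eq. intros. reflexivity.
Qed.

Lemma zsum_exchange q (H : Z -> Z -> R) :
  zsum q (fun n => zsum q (fun m => H n m)) = zsum q (fun m => zsum q (fun n => H n m)).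
Proof. apply sum_f_R0_exchange. Qed.

Lemma sum_f_R0_delta (f : nat -> R) j N : (j <= N)%nat ->
  sum_f_R0 (fun i => if Nat.eqb i j then f i else 0) N = f j.
Proof.
  induction N as [|N IH]; intros HjN.
  - now replace j with 0%nat by lia.
  - rewrite tech5. destruct (Nat.eq_dec j (S N)) as [->|Hj].
    + rewrite Nat.eqb_refl, (sum_eq _ (fun _ => 0 * 0)), <- scal_sum.
      * ring.
      * intros i Hi. destruct (Nat.eqb_spec i (S N)); [lia | ring].
    + rewrite IH by lia. destruct (Nat.eqb_spec (S N) j); [lia | ring].
Qed.

Lemma zsum_delta q F k : (- q <= k <= q)%Z ->
  zsum q (fun m => if Z.eqb m k then F m else 0) = F k.
Proof.
  intros Hk. unfold zsum.
  rewrite (sum_eq _ (fun i => if Nat.eqb i (Z.to_nat (k + q)) then F (Z.of_nat i - q)%Z else 0)).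
  - rewrite sum_f_R0_delta by lia. f_equal. lia.
  - intros i Hi.
    destruct (Z.eqb_spec (Z.of_nat i - q) k), (Nat.eqb_spec i (Z.to_nat (k + q))); auto; lia.
Qed.

Lemma zsum_fold q F : (0 <= q)%Z ->
  zsum q F = F 0%Z + sum1 (fun m => F (Z.of_nat m) + F (- Z.of_nat m)%Z) (Z.to_nat q).
Proof.
  intros Hq. destruct (Z_of_nat_complete q Hq) as [p ->]. unfold zsum.
  replace (Z.to_nat (2 * Z.of_nat p)) with (2 * p)%nat by lia. rewrite Nat2Z.id.
  clear Hq. induction p as [|p IH]; [simpl; lra|].
  replace (2 * S p)%nat with (S (S (2 * p))) by lia.
  rewrite tech5, decomp_sum by lia.
  replace (pred (S (2 * p))) with (2 * p)%nat by lia.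
  rewrite (sum_eq _ (fun i => F (Z.of_nat i - Z.of_nat p)%Z)) by (intros; f_equal; lia).
  rewrite IH. cbn [sum1].
  replace (Z.of_nat 0 - Z.of_nat (S p))%Z with (- Z.of_nat (S p))%Z by lia.
  replace (Z.of_nat (S (S (2 * p))) - Z.of_nat (S p))%Z with (Z.of_nat (S p)) by lia.
  lra.
Qed.

Lemma cos_add_2PI_IZR x z : cos (x + 2 * PI * IZR z) = cos x.
Proof.
  rewrite cos_plus. replace (2 * PI * IZR z) with (2 * (IZR z * PI)) by ring.
  rewrite cos_2a_sin, sin_2a, (sin_eq_0_1 _ (ex_intro _ z eq_refl)). ring.
Qed.

Lemma sin_PI_div_eq0 (x y : Z) : (y <> 0)%Z ->
  sin (PI * IZR x / IZR y) = 0 -> exists K, x = (K * y)%Z.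
Proof.
  intros Hy Hs. apply sin_eq_0_0 in Hs as [K HK]. exists K. apply eq_IZR.
  assert (IZR y <> 0) by (apply not_0_IZR; exact Hy).
  pose proof PI_RGT_0. rewrite mult_IZR.
  apply (Rmult_eq_reg_l (PI / IZR y)).
  - transitivity (PI * IZR x / IZR y); [field; auto | rewrite HK; field; auto].
  - unfold Rdiv. apply Rmult_integral_contrapositive. split; [lra | now apply Rinv_neq_0_compat].
Qed.

Lemma sin_sum_telescope y M :
  2 * sin y * sum1 (fun m => sin (2 * y * INR m)) M = cos y - cos (y * (2 * INR M + 1)).
Proof.
  induction M as [|M IH]; [simpl; replace (y * (2 * 0 + 1)) with y by ring; ring|].
  cbn [sum1]. rewrite Rmult_plus_distr_l, IH, S_INR.
  set (X := 2 * y * (INR M + 1)).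
  replace (y * (2 * INR M + 1)) with (X - y) by (unfold X; ring).
  replace (y * (2 * (INR M + 1) + 1)) with (X + y) by (unfold X; ring).
  rewrite cos_minus, cos_plus. ring.
Qed.

Lemma cos_sum_telescope y M :
  2 * sin y * sum1 (fun m => cos (2 * y * INR m)) M = sin (y * (2 * INR M + 1)) - sin y.
Proof.
  induction M as [|M IH]; [simpl; replace (y * (2 * 0 + 1)) with y by ring; ring|].
  cbn [sum1]. rewrite Rmult_plus_distr_l, IH, S_INR.
  set (X := 2 * y * (INR M + 1)).
  replace (y * (2 * INR M + 1)) with (X - y) by (unfold X; ring).
  replace (y * (2 * (INR M + 1) + 1)) with (X + y) by (unfold X; ring).
  rewrite sin_minus, sin_plus. ring.
Qed.

Lemma sin_sum_eq0 w M : (exists z, w * INR M = IZR z * PI) ->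
  sum1 (fun m => sin (2 * w * INR m)) M = 0.
Proof.
  intros [z Hz]. destruct (Req_dec (sin w) 0) as [Hs|Hs].
  - apply sin_eq_0_0 in Hs as [K ->]. apply sum1_eq0. intros m _.
    apply sin_eq_0_1. exists (2 * K * Z.of_nat m)%Z.
    rewrite INR_IZR_INZ, !mult_IZR. ring.
  - apply (Rmult_eq_reg_l (2 * sin w)); [|lra].
    rewrite sin_sum_telescope, Rmult_0_r.
    replace (w * (2 * INR M + 1)) with (w + 2 * PI * IZR z) by lra.
    rewrite cos_add_2PI_IZR. ring.
Qed.

Section SinCosSum.

Variables (a b : R) (L : nat).
Hypothesis haL : a * INR L = 2 * PI.

Let u := (a - b) / 2.
Let v := (a + b) / 2.

Lemma sin_cos_sum_split :
  sum1 (fun m => sin (a * INR m) * cos (b * INR m)) L =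
  / 2 * (sum1 (fun m => sin (2 * v * INR m)) L + sum1 (fun m => sin (2 * u * INR m)) L).
Proof.
  rewrite <- sum1_add, <- sum1_scal. apply sum1_ext. intros m _.
  rewrite form3. replace a with (v + u) by (unfold u, v; field).
  replace b with (v - u) by (unfold u, v; field).
  replace ((2 * v * INR m - 2 * u * INR m) / 2) with ((v - u) * INR m) by field.
  replace ((2 * v * INR m + 2 * u * INR m) / 2) with ((v + u) * INR m) by field.
  field.
Qed.

Lemma cos_sub_cos_eq : cos b - cos a = 2 * sin u * sin v.
Proof.
  rewrite form2. replace ((b - a) / 2) with (- u) by (unfold u; field).
  replace ((b + a) / 2) with v by (unfold v; field). rewrite sin_neg. ring.
Qed.

Lemma sin_cos_sum_mul_cos_sub :
  sum1 (fun m => sin (a * INR m) * cos (b * INR m)) L * (cos b - cos a) =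
  sin a * sin (b * INR L / 2) ^ 2.
Proof.
  rewrite cos_sub_cos_eq, sin_cos_sum_split.
  transitivity (/ 2 * (sin u * (2 * sin v * sum1 (fun m => sin (2 * v * INR m)) L)
                     + sin v * (2 * sin u * sum1 (fun m => sin (2 * u * INR m)) L))).
  { ring. }
  rewrite !sin_sum_telescope.
  set (c := b * INR L).
  replace (v * (2 * INR L + 1)) with (v + c + 2 * PI * IZR 1)
    by (unfold v, c; simpl; rewrite <- haL; field).
  replace (u * (2 * INR L + 1)) with (u - c + 2 * PI * IZR 1)
    by (unfold u, c; simpl; rewrite <- haL; field).
  rewrite !cos_add_2PI_IZR, cos_plus, cos_minus.
  replace a with (u + v) by (unfold u, v; field). rewrite sin_plus.
  replace (cos c) with (1 - 2 * sin (c / 2) * sin (c / 2))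
    by (rewrite <- cos_2a_sin; f_equal; field).
  field.
Qed.

Lemma sin_cos_sum_eq0 : cos b = cos a ->
  sum1 (fun m => sin (a * INR m) * cos (b * INR m)) L = 0.
Proof.
  intros Hab.
  assert (Huv : sin u * sin v = 0) by (pose proof cos_sub_cos_eq; lra).
  (* [u L + v L = 2 PI], so one of them is a multiple of [PI] iff the other is. *)
  assert (HuvL : u * INR L + v * INR L = IZR 2 * PI) by (unfold u, v; simpl; lra).
  assert (Hu : exists z, u * INR L = IZR z * PI).
  { destruct (Rmult_integral _ _ Huv) as [Hs|Hs]; apply sin_eq_0_0 in Hs as [K HK].
    - exists (K * Z.of_nat L)%Z. rewrite HK, mult_IZR, <- INR_IZR_INZ. ring.
    - exists (2 - K * Z.of_nat L)%Z. rewrite HK in HuvL.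
      rewrite minus_IZR, mult_IZR, <- INR_IZR_INZ. lra. }
  destruct Hu as [z Hu].
  assert (Hv : v * INR L = IZR (2 - z) * PI) by (rewrite minus_IZR; lra).
  rewrite sin_cos_sum_split, !sin_sum_eq0 by eauto. ring.
Qed.

End SinCosSum.

Lemma dft_re_opp q f k : (0 <= q)%Z -> dft_re q f (- k) = dft_re q f k.
Proof.
  intros Hq. unfold dft_re. f_equal. apply zsum_ext; auto. intros n _.
  rewrite opp_IZR, <- cos_neg. f_equal. f_equal. unfold Rdiv. ring.
Qed.

Lemma dft_im_eq0_of_even q f k : (0 <= q)%Z -> even_on q f -> dft_im q f k = 0.
Proof.
  intros Hq Hf. unfold dft_im. rewrite zsum_fold by auto. rewrite sum1_eq0.
  - replace (2 * PI * IZR k * IZR 0 / IZR (2 * q + 1)) with 0 by (simpl; unfold Rdiv; ring).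
    rewrite sin_0. ring.
  - intros m Hm. rewrite Hf, opp_IZR by lia.
    replace (2 * PI * IZR k * - IZR (Z.of_nat m) / IZR (2 * q + 1))
      with (- (2 * PI * IZR k * IZR (Z.of_nat m) / IZR (2 * q + 1))) by (unfold Rdiv; ring).
    rewrite sin_neg. ring.
Qed.

Lemma dft_re_sub q F G k :
  dft_re q (fun n => F n - G n) k = dft_re q F k - dft_re q G k.
Proof.
  unfold dft_re, zsum. rewrite <- Rmult_minus_distr_l, <- minus_sum. f_equal.
  apply sum_eq. intros. ring.
Qed.

Lemma dft_re_scal q c F k : dft_re q (fun n => c * F n) k = c * dft_re q F k.
Proof.
  unfold dft_re. set (N := IZR (2 * q + 1)).
  transitivity (/ sqrt N * zsum q (fun n => c * (F n * cos (2 * PI * IZR k * IZR n / N)))).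
  - f_equal. apply sum_eq. intros. ring.
  - rewrite zsum_scal. ring.
Qed.

Lemma zsum_cos_kernel q j : (0 <= q)%Z -> (Z.abs j <= 2 * q)%Z ->
  zsum q (fun n => cos (2 * PI * IZR j * IZR n / IZR (2 * q + 1))) =
  if Z.eqb j 0 then IZR (2 * q + 1) else 0.
Proof.
  intros Hq Hj.
  assert (HN : 0 < IZR (2 * q + 1)) by (apply IZR_lt; lia).
  set (N := IZR (2 * q + 1)) in *.
  set (y := PI * IZR j / N).
  rewrite zsum_fold by auto.
  rewrite (sum1_ext _ (fun m => 2 * cos (2 * y * INR m))), sum1_scal.
  2:{ intros m _. rewrite opp_IZR, INR_IZR_INZ.
      replace (2 * PI * IZR j * - IZR (Z.of_nat m) / N)
        with (- (2 * y * IZR (Z.of_nat m))) by (unfold y; field; lra).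
      replace (2 * PI * IZR j * IZR (Z.of_nat m) / N)
        with (2 * y * IZR (Z.of_nat m)) by (unfold y; field; lra).
      rewrite cos_neg. ring. }
  replace (2 * PI * IZR j * IZR 0 / N) with 0 by (simpl; unfold Rdiv; ring).
  rewrite cos_0.
  destruct (Z.eqb_spec j 0) as [->|Hj0].
  - rewrite (sum1_ext _ (fun _ => 1)), sum1_const.
    + rewrite INR_IZR_INZ, Z2Nat.id by lia. unfold N. rewrite plus_IZR, mult_IZR. ring.
    + intros m _. unfold y. rewrite <- cos_0. f_equal. simpl. unfold Rdiv. ring.
  - assert (Hs : sin y <> 0).
    { intros Hs. apply sin_PI_div_eq0 in Hs as [K ->]; [|lia].
      destruct (Z.eq_dec K 0); subst; [lia | nia]. }
    (* [(2q+1) y = j PI], so the telescoped cosine sum collapses to [sin (j PI) - sin y]. *)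
    pose proof (cos_sum_telescope y (Z.to_nat q)) as Htel.
    replace (y * (2 * INR (Z.to_nat q) + 1)) with (IZR j * PI) in Htel.
    2:{ unfold y, N. rewrite INR_IZR_INZ, Z2Nat.id, plus_IZR, mult_IZR by lia.
        field. rewrite <- mult_IZR, <- plus_IZR. apply not_0_IZR. lia. }
    rewrite (sin_eq_0_1 _ (ex_intro _ j eq_refl)) in Htel.
    apply (Rmult_eq_reg_l (2 * sin y)); [|lra]. lra.
Qed.

Lemma dft_re_dft_re q f k : (0 <= q)%Z -> (- q <= k <= q)%Z ->
  dft_re q (dft_re q f) k = / 2 * (f k + f (- k)%Z).
Proof.
  intros Hq Hk.
  assert (HN : 0 < IZR (2 * q + 1)) by (apply IZR_lt; lia).
  unfold dft_re. set (N := IZR (2 * q + 1)) in *.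
  assert (Hs0 : 0 < sqrt N) by (apply sqrt_lt_R0; auto).
  rewrite (zsum_ext q _ (fun n => / sqrt N * zsum q (fun m =>
     f m * cos (2 * PI * IZR n * IZR m / N) * cos (2 * PI * IZR k * IZR n / N)))); auto.
  2:{ intros n _. rewrite Rmult_assoc, zsum_mulr. reflexivity. }
  rewrite zsum_scal, zsum_exchange.
  (* Product to sum: the inner sum over [n] is an orthogonality kernel at [m + k] and [m - k]. *)
  rewrite (zsum_ext q _ (fun m => / 2 * N *
     ((if Z.eqb m (- k) then f m else 0) + (if Z.eqb m k then f m else 0)))); auto.
  2:{ intros m Hm.
      rewrite (zsum_ext q _ (fun n => f m * / 2 *
        (cos (2 * PI * IZR (m + k) * IZR n / N) + cos (2 * PI * IZR (m - k) * IZR n / N)))); auto.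
      2:{ intros n _. rewrite plus_IZR, minus_IZR.
          replace (2 * PI * (IZR m + IZR k) * IZR n / N) with
            (2 * PI * IZR n * IZR m / N + 2 * PI * IZR k * IZR n / N) by (field; lra).
          replace (2 * PI * (IZR m - IZR k) * IZR n / N) with
            (2 * PI * IZR n * IZR m / N - 2 * PI * IZR k * IZR n / N) by (field; lra).
          rewrite cos_plus, cos_minus. field. }
      rewrite zsum_scal, zsum_add, !zsum_cos_kernel by lia. fold N.
      destruct (Z.eqb_spec (m + k) 0), (Z.eqb_spec (m - k) 0),
        (Z.eqb_spec m (- k)), (Z.eqb_spec m k); try lia; ring. }
  rewrite zsum_scal, zsum_add, !zsum_delta by lia.
  field_simplify; [|lra]. rewrite <- Rsqr_pow2, Rsqr_sqrt by lra. field. lra.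
Qed.

Lemma cos_2PI_div_lt x y N : 0 < N -> 0 <= x -> x < y -> 2 * y <= N ->
  cos (2 * PI * y / N) < cos (2 * PI * x / N).
Proof.
  intros HN Hx Hxy HyN. pose proof PI_RGT_0.
  assert (Hbound : forall t, 0 <= t -> 2 * t <= N -> 0 <= 2 * PI * t / N <= PI).
  { intros t Ht HtN. split.
    - unfold Rdiv. apply Rmult_le_pos; [nra | left; apply Rinv_0_lt_compat; lra].
    - apply Rmult_le_reg_r with N; [lra|]. unfold Rdiv.
      rewrite Rmult_assoc, Rinv_l by lra. nra. }
  apply cos_decreasing_1; try apply Hbound; try lra.
  unfold Rdiv. apply Rmult_lt_compat_r; [apply Rinv_0_lt_compat; lra | nra].
Qed.

Lemma cos_2PI_div_abs n N : cos (2 * PI * IZR n / N) = cos (2 * PI * IZR (Z.abs n) / N).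
Proof.
  destruct (Z.abs_spec n) as [[_ ->]|[_ ->]]; auto.
  rewrite opp_IZR, <- cos_neg. f_equal. unfold Rdiv. ring.
Qed.

Lemma gfun_opp l n : gfun l (- n) = gfun l n.
Proof. unfold gfun. rewrite Z.abs_opp. reflexivity. Qed.

Definition gdenom (l n : Z) : R := cos (2 * PI * IZR n / IZR (l * l)) - cos (2 * PI / IZR l).

Section Ghat.

Variables l q : Z.
Hypothesis hl3 : (3 <= l)%Z.
Hypothesis hq : (2 * q + 1 = l * l)%Z.

Lemma q_nonneg : (0 <= q)%Z.
Proof. nia. Qed.

Lemma l_lt_q : (l < q)%Z.
Proof. nia. Qed.

Lemma IZR_l_pos : 0 < IZR l.
Proof. apply IZR_lt. lia. Qed.

Lemma sin_2PI_div_l_pos : 0 < sin (2 * PI / IZR l).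
Proof.
  pose proof PI_RGT_0. pose proof IZR_l_pos.
  assert (3 <= IZR l) by (apply IZR_le; lia).
  apply sin_gt_0.
  - apply Rdiv_lt_0_compat; lra.
  - apply Rmult_lt_reg_r with (IZR l); auto. unfold Rdiv.
    rewrite Rmult_assoc, Rinv_l by lra. nra.
Qed.

Lemma gfun_eq0 n : (l <= Z.abs n)%Z -> gfun l n = 0.
Proof.
  intros Hn. pose proof IZR_l_pos. unfold gfun.
  destruct (Z.leb_spec (Z.abs n) l); auto.
  replace (Z.abs n) with l by lia.
  replace (2 * PI * IZR l / IZR l) with (2 * PI) by (field; lra). apply sin_2PI.
Qed.

Lemma dft_re_gfun_sum k : dft_re q (gfun l) k =
  2 / IZR l * sum1 (fun m => sin (2 * PI / IZR l * INR m) *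
                             cos (2 * PI * IZR k / IZR (l * l) * INR m)) (Z.to_nat l).
Proof.
  pose proof IZR_l_pos. pose proof l_lt_q. pose proof q_nonneg.
  assert (HLL : IZR (l * l) <> 0) by (rewrite mult_IZR; nra).
  unfold dft_re. rewrite zsum_fold by auto.
  replace (sqrt (IZR (2 * q + 1))) with (IZR l)
    by (rewrite hq, mult_IZR, sqrt_square; lra).
  replace (gfun l 0) with 0
    by (unfold gfun; simpl; replace (2 * PI * 0 / IZR l) with 0 by (unfold Rdiv; ring);
        rewrite sin_0; destruct (0 <=? l)%Z; reflexivity).
  rewrite (sum1_trunc _ (Z.to_nat l)) by (lia || intros m Hm; rewrite gfun_opp, gfun_eq0 by lia; ring).
  rewrite Rmult_0_l, Rplus_0_l, Rdiv_def, (Rmult_comm 2 (/ IZR l)), (Rmult_assoc (/ IZR l) 2),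
    <- (sum1_scal 2).
  apply Rmult_eq_compat_l, sum1_ext. intros m Hm.
  rewrite gfun_opp, opp_IZR, hq, INR_IZR_INZ. unfold gfun.
  rewrite Z.abs_eq by lia. destruct (Z.leb_spec (Z.of_nat m) l); [|lia].
  replace (2 * PI * IZR k * - IZR (Z.of_nat m) / IZR (l * l))
    with (- (2 * PI * IZR k / IZR (l * l) * IZR (Z.of_nat m))) by (field; auto).
  replace (2 * PI * IZR k * IZR (Z.of_nat m) / IZR (l * l))
    with (2 * PI * IZR k / IZR (l * l) * IZR (Z.of_nat m)) by (field; auto).
  replace (2 * PI * IZR (Z.of_nat m) / IZR l)
    with (2 * PI / IZR l * IZR (Z.of_nat m)) by (field; lra).
  rewrite cos_neg. ring.
Qed.

Lemma INR_to_nat_l : INR (Z.to_nat l) = IZR l.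
Proof. rewrite INR_IZR_INZ, Z2Nat.id by lia. reflexivity. Qed.

Lemma period_l : 2 * PI / IZR l * INR (Z.to_nat l) = 2 * PI.
Proof. pose proof IZR_l_pos. rewrite INR_to_nat_l. field. lra. Qed.

Lemma dft_re_gfun n : gdenom l n <> 0 ->
  dft_re q (gfun l) n =
  2 * (sin (PI * IZR n / IZR l)) ^ 2 * sin (2 * PI / IZR l) /
  (IZR l * gdenom l n).
Proof.
  intros HD. pose proof IZR_l_pos.
  rewrite dft_re_gfun_sum.
  pose proof (sin_cos_sum_mul_cos_sub _ (2 * PI * IZR n / IZR (l * l)) _ period_l) as HS.
  replace (2 * PI * IZR n / IZR (l * l) * INR (Z.to_nat l) / 2) with (PI * IZR n / IZR l) in HS
    by (rewrite INR_to_nat_l, mult_IZR; field; lra).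
  fold (gdenom l n) in HS. set (S := sum1 _ _) in *.
  replace S with (sin (2 * PI / IZR l) * sin (PI * IZR n / IZR l) ^ 2 / gdenom l n)
    by (rewrite <- HS; field; auto).
  field. split; lra.
Qed.

Lemma dft_re_gfun_mul_gdenom n : gdenom l n <> 0 ->
  dft_re q (gfun l) n * gdenom l n =
  2 * (sin (PI * IZR n / IZR l)) ^ 2 * sin (2 * PI / IZR l) / IZR l.
Proof.
  intros HD. pose proof IZR_l_pos. rewrite dft_re_gfun by exact HD. field. split; lra.
Qed.

Lemma dft_re_gfun_eq0 n : gdenom l n = 0 -> dft_re q (gfun l) n = 0.
Proof.
  intros HD. unfold gdenom in HD.
  rewrite dft_re_gfun_sum, sin_cos_sum_eq0 by (apply period_l || lra). ring.
Qed.

Lemma cos_2PI_div_l : cos (2 * PI / IZR l) = cos (2 * PI * IZR l / IZR (l * l)).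
Proof. pose proof IZR_l_pos. f_equal. rewrite mult_IZR. field. lra. Qed.

Lemma gdenom_neg n : (l < Z.abs n <= q)%Z -> gdenom l n < 0.
Proof.
  intros Hn. unfold gdenom. rewrite cos_2PI_div_abs, cos_2PI_div_l.
  enough (cos (2 * PI * IZR (Z.abs n) / IZR (l * l)) < cos (2 * PI * IZR l / IZR (l * l))) by lra.
  apply cos_2PI_div_lt.
  - apply IZR_lt. nia.
  - apply IZR_le. lia.
  - apply IZR_lt. lia.
  - rewrite <- mult_IZR. apply IZR_le. nia.
Qed.

Lemma gdenom_pos n : (Z.abs n < l)%Z -> 0 < gdenom l n.
Proof.
  intros Hn. unfold gdenom. rewrite cos_2PI_div_abs, cos_2PI_div_l.
  enough (cos (2 * PI * IZR l / IZR (l * l)) < cos (2 * PI * IZR (Z.abs n) / IZR (l * l))) by lra.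
  apply cos_2PI_div_lt.
  - apply IZR_lt, Z.mul_pos_pos; lia.
  - apply IZR_le. lia.
  - apply IZR_lt. lia.
  - rewrite <- mult_IZR. apply IZR_le, Z.mul_le_mono_nonneg_r; lia.
Qed.

Lemma gdenom_eq0 n : Z.abs n = l -> gdenom l n = 0.
Proof. intros Hn. unfold gdenom. rewrite cos_2PI_div_abs, cos_2PI_div_l, Hn. ring. Qed.

End Ghat.

Lemma in_Adisc_of_dft_re_eq_opp q f : (0 <= q)%Z -> even_on q f ->
  (forall n, (Z.abs n <= q)%Z -> dft_re q f n = - f n) ->
  f 0%Z = 0 -> f q = 1 -> in_Adisc (-1) q f.
Proof.
  intros Hq Hev Hdft H0 H1.
  assert (Hm1 : f (- q)%Z = 1) by (rewrite Hev by lia; exact H1).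
  unfold in_Adisc. rewrite !Hdft, H0, H1, Hm1 by lia.
  rewrite !(dft_im_eq0_of_even q f) by auto.
  repeat split; auto; lra.
Qed.

Lemma is_k_of_dft_re_eq_opp q f k : (0 <= q)%Z -> even_on q f ->
  (forall n, (Z.abs n <= q)%Z -> dft_re q f n = - f n) ->
  (1 <= k <= q)%Z -> (forall n, (k <= Z.abs n <= q)%Z -> 0 <= f n) ->
  f (k - 1)%Z < 0 -> is_k (-1) q f k.
Proof.
  intros Hq Hev Hdft Hk Hpos Hneg.
  split; [lia | split].
  - intros n Hn. rewrite Hdft, (dft_im_eq0_of_even q f) by (auto || lia).
    specialize (Hpos n Hn). repeat split; lra.
  - intros k' Hk' Hprop. apply (Rlt_not_le _ _ Hneg), (proj1 (Hprop (k - 1)%Z ltac:(lia))).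
Qed.

Section Fstar.

Variables l q : Z.
Hypothesis hl3 : (3 <= l)%Z.
Hypothesis hq : (2 * q + 1 = l * l)%Z.

Lemma fstar_even : even_on q (fstar l q).
Proof.
  intros n _. unfold fstar. rewrite gfun_opp, dft_re_opp by apply (q_nonneg l q hl3 hq).
  reflexivity.
Qed.

Lemma dft_re_fstar n : (Z.abs n <= q)%Z -> dft_re q (fstar l q) n = - fstar l q n.
Proof.
  intros Hn. pose proof (q_nonneg l q hl3 hq). unfold fstar at 1.
  rewrite dft_re_sub, dft_re_dft_re, gfun_opp by lia.
  unfold fstar. field.
Qed.

Lemma fstar_0 : fstar l q 0 = 0.
Proof.
  pose proof (gdenom_pos l hl3 0 ltac:(lia)).
  unfold fstar. rewrite dft_re_gfun by (auto; lra).
  unfold gfun. simpl. unfold Rdiv. rewrite !Rmult_0_r, Rmult_0_l, sin_0.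
  destruct (0 <=? l)%Z; ring.
Qed.

Lemma fstar_nonneg n : (l <= Z.abs n <= q)%Z -> 0 <= fstar l q n.
Proof.
  intros Hn. unfold fstar. rewrite gfun_eq0 by lia.
  destruct (Z.eq_dec (Z.abs n) l) as [E|E].
  - rewrite (dft_re_gfun_eq0 l q hl3 hq n (gdenom_eq0 l hl3 n E)). lra.
  - pose proof (gdenom_neg l q hl3 hq n ltac:(lia)) as HD.
    pose proof (dft_re_gfun_mul_gdenom l q hl3 hq n ltac:(lra)) as HgD.
    pose proof (sin_2PI_div_l_pos l hl3). pose proof (IZR_l_pos l hl3).
    assert (0 <= 2 * sin (PI * IZR n / IZR l) ^ 2 * sin (2 * PI / IZR l) / IZR l).
    { unfold Rdiv. apply Rmult_le_pos; [|left; apply Rinv_0_lt_compat; lra].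
      pose proof (pow2_ge_0 (sin (PI * IZR n / IZR l))). nra. }
    nra.
Qed.

Lemma fstar_q_pos : 0 < fstar l q q.
Proof.
  pose proof (l_lt_q l q hl3 hq). pose proof (IZR_l_pos l hl3).
  pose proof (sin_2PI_div_l_pos l hl3).
  pose proof (gdenom_neg l q hl3 hq q ltac:(lia)) as HD.
  pose proof (dft_re_gfun_mul_gdenom l q hl3 hq q ltac:(lra)) as HgD.
  (* [2q = l^2 - 1] is not a multiple of [l], so [q PI / l] is not a multiple of [PI]. *)
  assert (Hs : sin (PI * IZR q / IZR l) <> 0).
  { intros Hs. apply sin_PI_div_eq0 in Hs as [K HK]; [|lia].
    assert (Hl1 : (l * (l - 2 * K) = 1)%Z) by nia.
    destruct (Z.le_gt_cases (l - 2 * K) 0); nia. }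
  assert (0 < 2 * sin (PI * IZR q / IZR l) ^ 2 * sin (2 * PI / IZR l) / IZR l).
  { apply Rdiv_lt_0_compat; [|lra].
    pose proof (Rsqr_pos_lt _ Hs). unfold Rsqr in *. simpl. nra. }
  unfold fstar. rewrite gfun_eq0 by lia. nra.
Qed.

Lemma fstar_pred_neg : fstar l q (l - 1) < 0.
Proof.
  pose proof PI_RGT_0. pose proof (IZR_l_pos l hl3).
  assert (3 <= IZR l) by (apply IZR_le; lia).
  pose proof (sin_2PI_div_l_pos l hl3).
  pose proof (gdenom_pos l hl3 (l - 1) ltac:(lia)) as HD.
  pose proof (dft_re_gfun_mul_gdenom l q hl3 hq (l - 1) ltac:(lra)) as HgD.
  assert (Hg : gfun l (l - 1) < 0).
  { unfold gfun. rewrite Z.abs_eq by lia. destruct (Z.leb_spec (l - 1) l); [|lia].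
    rewrite minus_IZR. apply sin_lt_0.
    - apply Rmult_lt_reg_r with (IZR l); auto. unfold Rdiv.
      rewrite Rmult_assoc, Rinv_l by lra. nra.
    - apply Rmult_lt_reg_r with (IZR l); auto. unfold Rdiv.
      rewrite Rmult_assoc, Rinv_l by lra. nra. }
  assert (Hs : 0 < sin (PI * IZR (l - 1) / IZR l)).
  { rewrite minus_IZR. apply sin_gt_0.
    - apply Rdiv_lt_0_compat; nra.
    - apply Rmult_lt_reg_r with (IZR l); auto. unfold Rdiv.
      rewrite Rmult_assoc, Rinv_l by lra. nra. }
  assert (0 < 2 * sin (PI * IZR (l - 1) / IZR l) ^ 2 * sin (2 * PI / IZR l) / IZR l).
  { apply Rdiv_lt_0_compat; [|lra].
    assert (0 < sin (PI * IZR (l - 1) / IZR l) ^ 2) by (apply pow_lt; lra). nra. }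
  unfold fstar. nra.
Qed.

Lemma scaled_fstar_even c : even_on q (fun n => c * fstar l q n).
Proof. intros n Hn. rewrite fstar_even; auto. Qed.

Lemma dft_re_scaled_fstar c n : (Z.abs n <= q)%Z ->
  dft_re q (fun m => c * fstar l q m) n = - (c * fstar l q n).
Proof. intros Hn. rewrite dft_re_scal, dft_re_fstar by auto. ring. Qed.

Lemma normalized_fstar_in_Adisc : in_Adisc (-1) q (fun n => / fstar l q q * fstar l q n).
Proof.
  pose proof fstar_q_pos.
  apply in_Adisc_of_dft_re_eq_opp.
  - apply (q_nonneg l q hl3 hq).
  - apply scaled_fstar_even.
  - apply dft_re_scaled_fstar.
  - rewrite fstar_0. ring.
  - field. lra.
Qed.

Lemma normalized_fstar_is_k : is_k (-1) q (fun n => / fstar l q q * fstar l q n) l.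
Proof.
  pose proof fstar_q_pos. pose proof (l_lt_q l q hl3 hq).
  assert (0 < / fstar l q q) by (apply Rinv_0_lt_compat; lra).
  apply is_k_of_dft_re_eq_opp.
  - lia.
  - apply scaled_fstar_even.
  - apply dft_re_scaled_fstar.
  - lia.
  - intros n Hn. apply Rmult_le_pos; [lra | apply fstar_nonneg; auto].
  - pose proof fstar_pred_neg. nra.
Qed.

End Fstar.

Theorem mainTheorem16 (l q : Z)
  (hl3 : (3 <= l)%Z) (hlodd : Z.Odd l) (hq : (2 * q + 1 = l * l)%Z) :
  (forall n : Z, (Z.abs n <= q)%Z ->
     dft_im q (gfun l) n = 0 /\
     (cos (2 * PI * IZR n / IZR (l * l)) - cos (2 * PI / IZR l) <> 0 ->
        dft_re q (gfun l) n =
        2 * (sin (PI * IZR n / IZR l)) ^ 2 * sin (2 * PI / IZR l) /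
        (IZR l * (cos (2 * PI * IZR n / IZR (l * l)) - cos (2 * PI / IZR l)))) /\
     (cos (2 * PI * IZR n / IZR (l * l)) - cos (2 * PI / IZR l) = 0 ->
        dft_re q (gfun l) n = 0)) /\
  (forall n : Z, (Z.abs n <= q)%Z ->
     dft_im q (fstar l q) n = 0 /\ dft_re q (fstar l q) n = - fstar l q n) /\
  fstar l q 0%Z = 0 /\
  (forall n : Z, (l <= Z.abs n <= q)%Z -> 0 <= fstar l q n) /\
  (exists c : R, 0 < c /\
     in_Adisc (-1) q (fun n => c * fstar l q n) /\
     is_k (-1) q (fun n => c * fstar l q n) l) /\
  (forall m : Z, is_Adisc (-1) q m -> (m <= l)%Z).
Proof.
  pose proof (q_nonneg l q hl3 hq) as Hq.
  pose proof (normalized_fstar_in_Adisc l q hl3 hq) as HA.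
  pose proof (normalized_fstar_is_k l q hl3 hq) as Hk.
  repeat split.
  - apply dft_im_eq0_of_even; auto. intros m _. apply gfun_opp.
  - apply dft_re_gfun; auto.
  - apply dft_re_gfun_eq0; auto.
  - apply dft_im_eq0_of_even; auto. apply fstar_even; auto.
  - apply dft_re_fstar; auto.
  - apply fstar_0; auto.
  - apply fstar_nonneg; auto.
  - exists (/ fstar l q q). split; [|auto].
    apply Rinv_0_lt_compat, fstar_q_pos; auto.
  - intros m [_ Hmin]. exact (Hmin _ l HA Hk).
Qed.
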